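(* Let $\mathbf L\in\mathbb R_+^{n\times k}$. Let $\mathbf p\in\operatorname{relint}(\Delta_n)$ and $c\in\mathbb R_+$ be such that $\mathbf p^\top\boldsymbol\ell_t=c$ for all $t\in[k]$. Then for every $t\in[k]$, \[ \mu_{\mathcal Q^{\mathbf L}_t}(\mathbf p)\le n-\operatorname{affdim}(\mathbf L). \]
   Context: Notation: $[m]=\{1,\dots,m\}$; $\Delta_n=\{\mathbf p\in\mathbb R_+^n:\sum_i p_i=1\}$, with relative interior the points having all entries strictly positive. A loss matrix $\mathbf L\in\mathbb R_+^{n\times k}$ has columns $\boldsymbol\ell_t$; $\operatorname{affdim}(\mathbf L)$ is the dimension of the affine hull of $\{\boldsymbol\ell_1,\dots,\boldsymbol\ell_k\}$. Trigger probability set: $\mathcal Q^{\mathbf L}_t=\{\mathbf p\in\Delta_n: t\in\operatorname{argmin}_{t'\in[k]}\mathbf p^\top\boldsymbol\ell_{t'}\}$. For a convex set $\mathcal Q\subseteq\mathbb R^n$ and $\mathbf p\in\mathcal Q$, $\mathcal F_{\mathcal Q}(\mathbf p)=\{\mathbf v:\exists\epsilon_0>0,\ \mathbf p+\epsilon\mathbf v\in\mathcal Q\ \forall\epsilon\in(0,\epsilon_0)\}$ and $\mu_{\mathcal Q}(\mathbf p)=\dim(\mathcal F_{\mathcal Q}(\mathbf p)\cap(-\mathcal F_{\mathcal Q}(\mathbf p)))$. *)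

(* Real numbers rendered as an arbitrary realFieldType R
   (the statement is purely order-algebraic / linear-algebraic). *)
From HB Require Import structures.
From mathcomp Require Import all_boot all_order all_algebra.
From Stdlib Require Import ClassicalEpsilon.
Set Implicit Arguments. Unset Strict Implicit. Unset Printing Implicit Defensive.
Import Order.TTheory GRing.Theory Num.Theory.
Local Open Scope ring_scope.

Section Defs.
Variables (R : realFieldType) (n k : nat).

Definition pbool (P : Prop) : bool :=
  if excluded_middle_informative P then true else false.

Definition dotcol (L : 'M[R]_(n, k)) (p : 'rV[R]_n) (t : 'I_k) : R :=
  \sum_(i < n) p 0 i * L i t.

Definition lcol (L : 'M[R]_(n, k)) (t : 'I_k) : 'rV[R]_n := (col t L)^T.

Definition in_simplex (p : 'rV[R]_n) : Prop :=
  (forall i, 0 <= p 0 i) /\ \sum_(i < n) p 0 i = 1.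

Definition in_relint_simplex (p : 'rV[R]_n) : Prop :=
  (forall i, 0 < p 0 i) /\ \sum_(i < n) p 0 i = 1.

Definition trigger_set (L : 'M[R]_(n, k)) (t : 'I_k) (q : 'rV[R]_n) : Prop :=
  in_simplex q /\ forall t' : 'I_k, dotcol L q t <= dotcol L q t'.

Definition feas_dir (Q : 'rV[R]_n -> Prop) (p v : 'rV[R]_n) : Prop :=
  exists eps0 : R, 0 < eps0 /\
    forall eps : R, 0 < eps -> eps < eps0 -> Q (p + eps *: v).

(* linear dimension of a set S of vectors of R^n: the maximal number of
   linearly independent vectors in S (= dim of span S; for a subspace, its
   dimension). *)
Definition has_indep (S : 'rV[R]_n -> Prop) (m : nat) : Prop :=
  exists B : 'M[R]_(m, n), row_free B /\ forall i, S (row i B).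

Definition lin_dim (S : 'rV[R]_n -> Prop) : nat :=
  \max_(m < n.+1 | pbool (has_indep S m)) (m : nat).

Definition mu (Q : 'rV[R]_n -> Prop) (p : 'rV[R]_n) : nat :=
  lin_dim (fun v => feas_dir Q p v /\ feas_dir Q p (- v)).

(* affdim(L): dimension of the affine hull of the columns l_1..l_k,
   i.e. dimension of its direction space span{l_t - l_s}.
   (For k = 0 this gives 0; irrelevant since the statement is then vacuous.) *)
Definition affdim (L : 'M[R]_(n, k)) : nat :=
  lin_dim (fun v => exists t s : 'I_k, v = lcol L t - lcol L s).

End Defs.

From HB Require Import structures.
From mathcomp Require Import all_boot all_order all_algebra.
From Stdlib Require Import ClassicalEpsilon.

Set Implicit Arguments.
Unset Strict Implicit.
Unset Printing Implicit Defensive.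
Import Order.TTheory GRing.Theory Num.Theory.
Local Open Scope ring_scope.

(* Since p ties all the losses, a feasible direction v for Q_t at p must
   satisfy v^T l_t <= v^T l_t' for every t'.  If -v is feasible too, v^T l_t'
   does not depend on t', so F(p) ∩ -F(p) is orthogonal to every difference
   l_t' - l_s, and two mutually orthogonal families in R^n have dimensions
   adding up to at most n. *)

Lemma pboolP (P : Prop) : pbool P -> P.
Proof. by rewrite /pbool; case: excluded_middle_informative. Qed.

Section LinDim.
Variables (R : realFieldType) (n : nat).
Implicit Types S T : 'rV[R]_n -> Prop.

Lemma lin_dim_leP S b :
  (forall m, has_indep S m -> (m <= b)%N) -> (lin_dim S <= b)%N.
Proof. by move=> hS; apply/bigmax_leqP => m /pboolP /hS. Qed.

Lemma lin_dim_le S : (lin_dim S <= n)%N.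
Proof. by apply/bigmax_leqP => m _; rewrite -ltnS. Qed.

Lemma has_indep_le S m : has_indep S m -> (m <= n)%N.
Proof. by move=> [B [/eqP rkB _]]; rewrite -rkB rank_leq_col. Qed.

Lemma lin_dim_orthogonal S T :
    (forall u w, S u -> T w -> u *m w^T = 0) ->
  (lin_dim S + lin_dim T <= n)%N.
Proof.
move=> hST; rewrite addnC -leq_subRL ?lin_dim_le //.
apply: lin_dim_leP => m hm; rewrite leq_subRL ?lin_dim_le // addnC.
rewrite -(leq_subRL _ (has_indep_le hm)).
apply: lin_dim_leP => d [D [/eqP rkD hD]]; move: hm => [B [/eqP rkB hB]].
rewrite -rkB -rkD leq_subRL ?rank_leq_col // -(mxrank_tr D).
apply: mulmx0_rank_max; apply/matrixP => i j.
have /matrixP/(_ 0 0) := hST _ _ (hB i) (hD j); rewrite !mxE => hij.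
by apply: etrans hij; apply: eq_bigr => l _; rewrite !mxE.
Qed.

End LinDim.

Section Lineality.
Variables (R : realFieldType) (n k : nat) (L : 'M[R]_(n, k)).
Variables (p : 'rV[R]_n) (c : R).
Hypothesis hpc : forall t, dotcol L p t = c.

Lemma dotcolE v t : dotcol L v t = (v *m col t L) 0 0.
Proof. by rewrite !mxE; apply: eq_bigr => i _; rewrite mxE. Qed.

Lemma mulmx_col_dotcol v t : v *m col t L = (dotcol L v t)%:M.
Proof. by rewrite [LHS]mx11_scalar dotcolE. Qed.

Lemma dotcolDZ v w e t :
  dotcol L (v + e *: w) t = dotcol L v t + e * dotcol L w t.
Proof. by rewrite !dotcolE mulmxDl -scalemxAl !mxE. Qed.

Lemma dotcolN w t : dotcol L (- w) t = - dotcol L w t.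
Proof. by rewrite !dotcolE mulNmx mxE. Qed.

Lemma feas_dir_trigger_le t w t' :
  feas_dir (trigger_set L t) p w -> dotcol L w t <= dotcol L w t'.
Proof.
move=> [e0 [e0_gt0 hQ]]; have [he1 he2] := midf_lt e0_gt0.
have [_ /(_ t')] := hQ _ he1 he2.
by rewrite !dotcolDZ !hpc lerD2l ler_pM2l.
Qed.

Lemma lineality_dotcol_const t w t' :
    feas_dir (trigger_set L t) p w -> feas_dir (trigger_set L t) p (- w) ->
  dotcol L w t' = dotcol L w t.
Proof.
move=> hw hNw; apply/eqP; rewrite eq_le (feas_dir_trigger_le _ hw) andbT.
by have := feas_dir_trigger_le t' hNw; rewrite !dotcolN lerN2.
Qed.

Lemma lineality_orthogonal_lcolB t w t1 s1 :
    feas_dir (trigger_set L t) p w -> feas_dir (trigger_set L t) p (- w) ->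
  w *m (lcol L t1 - lcol L s1)^T = 0.
Proof.
move=> hw hNw; rewrite linearB /= !trmxK mulmxBr !mulmx_col_dotcol.
by rewrite !(lineality_dotcol_const _ hw hNw) subrr.
Qed.

End Lineality.

Theorem mainTheorem13 (R : realFieldType) (n k : nat) (L : 'M[R]_(n, k))
    (p : 'rV[R]_n) (c : R)
    (hL : forall i j, 0 <= L i j)
    (hp : in_relint_simplex p)
    (hc : 0 <= c)
    (hpc : forall t : 'I_k, dotcol L p t = c) :
  forall t : 'I_k, (mu (trigger_set L t) p <= n - affdim L)%N.
Proof.
move=> t; rewrite leq_subRL ?lin_dim_le // addnC.
apply: lin_dim_orthogonal => w _ [hw hNw] [t1 [s1 ->]].
exact: lineality_orthogonal_lcolB hpc _ _ _ _ hw hNw.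
Qed.
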